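(* Let $t\le n-2$. In every run of $P^{\min}$ in the context $\gamma_{\min,n,t}$, a total of exactly $n^2$ non-$\bot$ messages are sent, each an element of $\{0,1\}$, so $n^2$ bits are sent in total. In every run of $P^{\mathit{basic}}$ in the context $\gamma_{\mathit{basic},n,t}$, at most $O(n^2t)$ bits are sent in total (each non-$\bot$ message being one of the three values $0,1,(\mathit{init},1)$, encoded with a constant number of bits). Here $P^{\min}_i$ is: if $\mathit{decided}_i\ne\bot$ then $\mathtt{noop}$; else if $\mathit{init}_i=0$ or $\mathit{rd}_i=0$ then $\mathtt{decide}_i(0)$; else if $\mathit{time}_i=t+1$ then $\mathtt{decide}_i(1)$; else $\mathtt{noop}$. And $P^{\mathit{basic}}_i$ is: if $\mathit{decided}_i\ne\bot$ then $\mathtt{noop}$; else if $\mathit{init}_i=0$ or $\mathit{rd}_i=0$ then $\mathtt{decide}_i(0)$; else if $\#1_i>n-\mathit{time}_i$ or $\mathit{rd}_i=1$ then $\mathtt{decide}_i(1)$; else $\mathtt{noop}$.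
   Context: Agents and runs. There are $n$ agents $\mathit{Agt}=\{1,\ldots,n\}$; time is $m\in\mathbb N$, and round $m+1$ is the step from time $m$ to time $m+1$. An information-exchange protocol specifies for each agent $i$ local states, initial states, actions $\{\mathtt{decide}_i(0),\mathtt{decide}_i(1),\mathtt{noop}\}$, a message function $\mu_{ij}(s,a)$ giving the message ($\bot$ = none) that $i$ sends to each agent $j$ (including $j=i$) when performing $a$ in state $s$, and a transition function. A failure pattern is a pair $(\mathcal N,F)$ with $\mathcal N\subseteq\mathit{Agt}$ and $F:\mathbb N\times\mathit{Agt}\times\mathit{Agt}\to\{0,1\}$, $F(m,i,j)=0$ meaning the round-$(m+1)$ message from $i$ to $j$ is lost. $SO(t)$ is the set of failure patterns with $|\mathit{Agt}\setminus\mathcal N|\le t$ and $F(m,i,j)=0\Rightarrow i\notin\mathcal N$. An action protocol $P$ maps local states to actions; together with an initial global state it determines a run: at each time $k$ each agent $i$ performs $a_i=P_i(r_i(k))$, sends $\mu_{ij}(r_i(k),a_i)$ to each $j$ (received iff $F(k,i,j)=1$), and updates its state. Minimal and basic contexts. $\gamma_{\min,n,t}$: failure model $SO(t)$; local states $\langle\mathit{time}_i,\mathit{init}_i,\mathit{decided}_i,\mathit{rd}_i\rangle$, initial states $\langle0,\mathit{init}_i,\bot,\bot\rangle$ with $\mathit{init}_i\in\{0,1\}$; $\mu_{ij}(s,\mathtt{decide}_i(v))=v$ and $\mu_{ij}(s,\mathtt{noop})=\bot$ for all $j$; the transition increments $\mathit{time}_i$, sets $\mathit{decided}_i:=v$ on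 action $\mathtt{decide}_i(v)$ (else unchanged), and sets $\mathit{rd}_i$ to $0$ (resp. $1$) if in that round $i$ received the message $0$ (resp. $1$), else $\bot$. $\gamma_{\mathit{basic},n,t}$: failure model $SO(t)$; local states $\langle\mathit{time}_i,\mathit{init}_i,\mathit{decided}_i,\mathit{rd}_i,\#1_i\rangle$, $\#1_i\in\{0,\ldots,n\}$, initial states $\langle0,\mathit{init}_i,\bot,\bot,0\rangle$; $\mu_{ij}(s,\mathtt{decide}_i(v))=v$, $\mu_{ij}(s,\mathtt{noop})=(\mathit{init},1)$ if $s$ has the form $\langle m,1,\bot,\bot,k\rangle$, and $\bot$ otherwise; the transition updates the first four components as in the minimal context and sets $\#1_i$ to the number of $(\mathit{init},1)$ messages received in the current round if $\mathit{decided}_i=\bot$ and $i$ receives no message $0$ or $1$ in that round, and to $0$ otherwise. *)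

From mathcomp Require Import all_boot.
Set Implicit Arguments. Unset Strict Implicit. Unset Printing Implicit Defensive.

Inductive action := Decide of bool | Noop.

(** Failure model SO(t): [N] is the set of nonfaulty agents; [F m i j = false]
    means the round-(m+1) message from i to j is lost. *)
Definition SO (n t : nat) (N : {set 'I_n}) (F : nat -> 'I_n -> 'I_n -> bool) : Prop :=
  #|~: N| <= t /\ (forall m i j, F m i j = false -> i \notin N).

Section Run.
Variables (n : nat) (S Msg : Type).
Variable P : S -> action.
(** message function mu i j s a ([None] = bottom) *)
Variable mu : 'I_n -> 'I_n -> S -> action -> option Msg.
(** transition: current state, performed action, received messages (indexed by sender) *)
Variable delta : S -> action -> ('I_n -> option Msg) -> S.
Variable s0 : 'I_n -> S.
Variable F : nat -> 'I_n -> 'I_n -> bool.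

Fixpoint gstate (m : nat) : 'I_n -> S :=
  match m with
  | 0 => s0
  | m'.+1 =>
      let g := gstate m' in
      fun i => delta (g i) (P (g i))
                 (fun k => if F m' k i then mu k i (g k) (P (g k)) else None)
  end.

(** message sent from i to j in round m+1 *)
Definition sent (m : nat) (i j : 'I_n) : option Msg :=
  let g := gstate m in mu i j (g i) (P (g i)).

Definition msgs_upto (M : nat) : nat :=
  \sum_(m < M) \sum_(i < n) \sum_(j < n) (isSome (sent m i j)).

Definition bits_upto (size : Msg -> nat) (M : nat) : nat :=
  \sum_(m < M) \sum_(i < n) \sum_(j < n)
     (if sent m i j is Some x then size x else 0).
End Run.

Definition rd_of (n : nat) (r : 'I_n -> option bool) : option bool :=
  if [exists k, r k == Some false] then Some false
  else if [exists k, r k == Some true] then Some true else None.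

Definition upd_decided (d : option bool) (a : action) : option bool :=
  if a is Decide v then Some v else d.

Record mstate := MState { mtime : nat; minit : bool;
                          mdecided : option bool; mrd : option bool }.

Definition mu_min (n : nat) (i j : 'I_n) (s : mstate) (a : action) : option bool :=
  if a is Decide v then Some v else None.

Definition delta_min (n : nat) (s : mstate) (a : action) (r : 'I_n -> option bool)
  : mstate :=
  MState (mtime s).+1 (minit s) (upd_decided (mdecided s) a) (rd_of r).

Definition s0_min (n : nat) (init : 'I_n -> bool) (i : 'I_n) : mstate :=
  MState 0 (init i) None None.

Definition Pmin (t : nat) (s : mstate) : action :=
  if mdecided s != None then Noop
  else if ~~ minit s || (mrd s == Some false) then Decide false
  else if mtime s == t.+1 then Decide true
  else Noop.

Definition msgs_min (n t : nat) (init : 'I_n -> bool)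
  (F : nat -> 'I_n -> 'I_n -> bool) (M : nat) : nat :=
  msgs_upto (Pmin t) (@mu_min n) (@delta_min n) (s0_min init) F M.

Record bstate := BState { btime : nat; binit : bool; bdecided : option bool;
                          brd : option bool; bcnt : nat }.

(** messages: [BDec v] is the value v, [BInit1] is (init,1) *)
Inductive bmsg := BDec of bool | BInit1.

Definition mu_basic (n : nat) (i j : 'I_n) (s : bstate) (a : action) : option bmsg :=
  match a with
  | Decide v => Some (BDec v)
  | Noop => if binit s && (bdecided s == None) && (brd s == None)
            then Some BInit1 else None
  end.

Definition dec_of (x : option bmsg) : option bool :=
  if x is Some (BDec v) then Some v else None.

Definition delta_basic (n : nat) (s : bstate) (a : action) (r : 'I_n -> option bmsg)
  : bstate :=
  let rv := fun k => dec_of (r k) in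
  BState (btime s).+1 (binit s) (upd_decided (bdecided s) a) (rd_of rv)
    (if (bdecided s == None) && (rd_of rv == None)
     then #|[pred k | if r k is Some BInit1 then true else false]| else 0).

Definition s0_basic (n : nat) (init : 'I_n -> bool) (i : 'I_n) : bstate :=
  BState 0 (init i) None None 0.

(** protocol P^basic; "#1_i > n - time_i" is read over the integers,
    i.e. as #1_i + time_i > n *)
Definition Pbasic (n : nat) (s : bstate) : action :=
  if bdecided s != None then Noop
  else if ~~ binit s || (brd s == Some false) then Decide false
  else if (n < bcnt s + btime s) || (brd s == Some true) then Decide true
  else Noop.

(** constant-size encoding of the three message values: 2 bits each *)
Definition bmsg_bits (x : bmsg) : nat := 2.

Definition bits_basic (n : nat) (init : 'I_n -> bool)
  (F : nat -> 'I_n -> 'I_n -> bool) (M : nat) : nat :=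
  bits_upto (Pbasic n) (@mu_basic n) (@delta_basic n) (s0_basic init) F bmsg_bits M.

From mathcomp Require Import all_boot zify.
Set Implicit Arguments. Unset Strict Implicit. Unset Printing Implicit Defensive.

(* Both protocols make each agent decide at most once: an agent acts only while
   its [decided] component is bottom, and deciding sets it.

   - P^min sends messages only when deciding, to all n agents, and every agent
     has decided by time t+2 (it decides at the latest at time t+1).  So from
     time t+2 on exactly n * n messages have been sent.
   - P^basic additionally sends (init,1) messages.  The key fact
     ([init1_only_early]) is that such a message is sent in round m+1 only when
     m <= t: an undecided agent that heard no decision at time k+1 received
     (init,1) from every nonfaulty agent (a nonfaulty agent that had decided
     earlier would have made it decide), so #1 >= n - t, and staying silent
     requires #1 + (k+1) <= n.  Every agent therefore sends at most
     n * (t + 2) messages of 2 bits, which gives the O(n^2 t) bound. *)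

Definition isdec (a : action) : nat := if a is Decide _ then 1 else 0.

Lemma decision_count (d : nat -> option bool) (a : nat -> action) :
  d 0 = None -> (forall m, d m.+1 = upd_decided (d m) (a m)) ->
  (forall m, d m != None -> a m = Noop) ->
  forall M, \sum_(m < M) isdec (a m) = (d M != None).
Proof.
move=> d0 dS quiet; elim=> [|M IH]; first by rewrite big_ord0 d0.
rewrite big_ord_recr IH dS; case: (d M) (quiet M) => [v /(_ isT) ->|_] //=.
by case: (a M).
Qed.

Lemma upd_decided_stays (d : option bool) (a : action) :
  d != None -> upd_decided d a != None.
Proof. by case: a. Qed.

Lemma rd_of_None n (r : 'I_n -> option bool) k : rd_of r = None -> r k = None.
Proof.
rewrite /rd_of; case: ifP => // /existsPn no0; case: ifP => // /existsPn no1 _.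
by move: (no0 k) (no1 k); case: (r k) => // -[]; rewrite eqxx.
Qed.

Lemma rd_of_Some n (r : 'I_n -> option bool) k v : r k = Some v -> rd_of r != None.
Proof. by move=> rk; apply/eqP => /(rd_of_None k); rewrite rk. Qed.

Section MinimalProtocol.
Variables (n t : nat) (init : 'I_n -> bool) (F : nat -> 'I_n -> 'I_n -> bool).
Let g : nat -> 'I_n -> mstate := gstate (Pmin t) (@mu_min n) (@delta_min n) (s0_min init) F.

Lemma min_time m i : mtime (g m i) = m.
Proof. by elim: m => [|m IH] //=; rewrite IH. Qed.

Lemma min_decided_step m i :
  mdecided (g m.+1 i) = upd_decided (mdecided (g m i)) (Pmin t (g m i)).
Proof. by []. Qed.

Lemma min_decisions M i :
  \sum_(m < M) isdec (Pmin t (g m i)) = (mdecided (g M i) != None).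
Proof.
apply: (@decision_count (fun m => mdecided (g m i)) (fun m => Pmin t (g m i)))
  => // m decided.
by rewrite /Pmin decided.
Qed.

(* At time t+1 an undecided agent decides, so all have decided by t+2. *)
Lemma min_decided_by M i : t.+2 <= M -> mdecided (g M i) != None.
Proof.
elim: M => [|M IH] //; rewrite leq_eqVlt => /orP[/eqP[<-]|/IH decided].
- rewrite min_decided_step /Pmin min_time eqxx.
  by case: (mdecided _) => //=; case: ifP.
- exact: upd_decided_stays.
Qed.

(* Each decision is sent to all n agents, and every agent decides once. *)
Lemma min_message_count M : t.+2 <= M -> msgs_min t init F M = n ^ 2.
Proof.
move=> late; rewrite /msgs_min /msgs_upto exchange_big /=.
have per_round i m : \sum_(j < n)
    isSome (sent (Pmin t) (@mu_min n) (@delta_min n) (s0_min init) F m i j)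
    = n * isdec (Pmin t (g m i)).
  rewrite (eq_bigr (fun=> isdec (Pmin t (g m i)))) ?sum_nat_const ?card_ord //.
  by move=> j _; rewrite /sent; case: (Pmin t _).
under eq_bigr => i _ do
  rewrite (eq_bigr _ (fun (m : 'I_M) _ => per_round i m)) -big_distrr /=
          min_decisions min_decided_by // muln1.
by rewrite sum_nat_const card_ord mulnn.
Qed.
End MinimalProtocol.

Lemma early_rounds M t : \sum_(m < M) (m <= t : nat) = minn M t.+1.
Proof.
elim: M => [|M IH]; first by rewrite big_ord0.
by rewrite big_ord_recr IH /=; case: (leqP M t) => /= bound; lia.
Qed.

Lemma Pbasic_Noop n (s : bstate) : bdecided s = None -> Pbasic n s = Noop ->
  [&& binit s, brd s == None & bcnt s + btime s <= n].
Proof.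
rewrite /Pbasic => -> /=; case: (binit s) => //=.
case: (brd s) => [[]|] //=; rewrite ?eqxx ?orbT // orbF leqNgt.
by case: ltnP.
Qed.

Section BasicProtocol.
Variables (n t : nat) (init : 'I_n -> bool) (N : {set 'I_n}).
Variable F : nat -> 'I_n -> 'I_n -> bool.
Let g : nat -> 'I_n -> bstate := gstate (Pbasic n) (@mu_basic n) (@delta_basic n) (s0_basic init) F.
Let received (m : nat) (i k : 'I_n) : option bmsg :=
  if F m k i then mu_basic k i (g m k) (Pbasic n (g m k)) else None.

Lemma basic_step m i :
  g m.+1 i = delta_basic (g m i) (Pbasic n (g m i)) (received m i).
Proof. by []. Qed.

Lemma basic_decided_step m i :
  bdecided (g m.+1 i) = upd_decided (bdecided (g m i)) (Pbasic n (g m i)).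
Proof. by []. Qed.

Lemma basic_time m i : btime (g m i) = m.
Proof. by elim: m => [|m IH] //; rewrite basic_step /= IH. Qed.

Lemma basic_decisions M i :
  \sum_(m < M) isdec (Pbasic n (g m i)) = (bdecided (g M i) != None).
Proof.
apply: (@decision_count (fun m => bdecided (g m i)) (fun m => Pbasic n (g m i)))
  => // m decided.
by rewrite /Pbasic decided.
Qed.

Lemma basic_decided_mono a b i :
  a <= b -> bdecided (g a i) != None -> bdecided (g b i) != None.
Proof.
move=> /subnK <-; elim: (b - a) => [|d IH] // decided.
exact: upd_decided_stays (IH decided).
Qed.

Lemma decided_earlier k j : bdecided (g k j) != None ->
  exists2 k', k' < k & Pbasic n (g k' j) <> Noop.
Proof.
elim: k => [|k IH] //; rewrite basic_decided_step.
case: (bdecided (g k j)) IH => [v|] /= IH.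
- by move=> _; case: (IH isT) => k' lt_k'k dec; exists k' => //; exact: ltnW.
- by case E: (Pbasic n (g k j)) => [v|] // _; exists k; rewrite // E.
Qed.

Hypothesis nonfaulty_reliable : forall m i j, F m i j = false -> i \notin N.
Hypothesis few_faulty : #|~: N| <= t.

Lemma nonfaulty_delivers m j i : j \in N -> F m j i.
Proof.
by move=> jN; case E: (F m j i) => //; move: (nonfaulty_reliable E); rewrite jN.
Qed.

(* A decision by a nonfaulty agent is heard by everybody in the next round,
   which makes every still undecided agent decide immediately. *)
Lemma nonfaulty_decision_adopted k j i : j \in N -> Pbasic n (g k j) <> Noop ->
  bdecided (g k.+2 i) != None.
Proof.
move=> jN dec_j; rewrite basic_decided_step.
case undecided: (bdecided (g k.+1 i)) => [v|]; first exact: upd_decided_stays.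
have heard : brd (g k.+1 i) != None.
  rewrite basic_step /=; move: dec_j; case Ej: (Pbasic n (g k j)) => [v|] // _.
  by apply: (@rd_of_Some _ _ j v); rewrite /received nonfaulty_delivers ?Ej.
move: (@Pbasic_Noop n _ undecided).
case: (Pbasic n (g k.+1 i)) => // /(_ erefl) /and3P[_ /eqP silent _].
by rewrite silent in heard.
Qed.

Lemma silent_round_count k i :
  bdecided (g k.+1 i) = None -> brd (g k.+1 i) = None -> #|N| <= bcnt (g k.+1 i).
Proof.
move=> undecided no_news.
have decided_k : bdecided (g k i) = None.
  move: undecided; rewrite basic_decided_step.
  by case: (bdecided (g k i)) => // v; case: (Pbasic n (g k i)).
have no_decision_heard : rd_of (fun x => dec_of (received k i x)) = None := no_news.
have -> : bcnt (g k.+1 i)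
          = #|[pred x | if received k i x is Some BInit1 then true else false]|.
  by rewrite basic_step /= decided_k no_decision_heard.
apply: subset_leq_card; apply/subsetP => j jN; rewrite inE.
move: (rd_of_None j no_decision_heard); rewrite /received nonfaulty_delivers //.
case Pj: (Pbasic n (g k j)) => [//|] _ /=.
case decided_j: (bdecided (g k j)) => [w|].
- case: (@decided_earlier k j); rewrite ?decided_j // => k' lt_k'k dec_j.
  have := @basic_decided_mono k'.+2 k.+1 i lt_k'k
            (nonfaulty_decision_adopted i jN dec_j).
  by rewrite undecided.
- by case/and3P: (Pbasic_Noop decided_j Pj) => -> -> _.
Qed.

Lemma init1_only_early m i : Pbasic n (g m i) = Noop ->
  binit (g m i) && (bdecided (g m i) == None) && (brd (g m i) == None) -> m <= t.
Proof.
case: m => [//|k] silent /andP[/andP[_ /eqP undecided] /eqP no_news].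
have counted := silent_round_count undecided no_news.
case/and3P: (Pbasic_Noop undecided silent) => _ _.
have := cardsC N; rewrite card_ord basic_time; lia.
Qed.

Lemma bits_per_message m i j :
  (if sent (Pbasic n) (@mu_basic n) (@delta_basic n) (s0_basic init) F m i j
   is Some x then bmsg_bits x else 0) <= 2 * ((m <= t) + isdec (Pbasic n (g m i))).
Proof.
rewrite /sent -/g /mu_basic.
case E: (Pbasic n (g m i)) => [v|]; first by case: (m <= t).
by case: ifP => // cond; rewrite (init1_only_early E cond).
Qed.

(* Summing over senders: n agents, each sending at most n * (t + 2) messages
   of 2 bits. *)
Lemma basic_bits_bound M : bits_basic init F M <= 4 * n ^ 2 * t.+1.
Proof.
rewrite /bits_basic /bits_upto.
apply: (@leq_trans (\sum_(m < M) \sum_(i < n)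
          n * (2 * ((m <= t) + isdec (Pbasic n (g m i)))))).
  apply: leq_sum => m _; apply: leq_sum => i _.
  rewrite -[X in _ <= X * _](card_ord n) -sum_nat_const.
  by apply: leq_sum => j _; apply: bits_per_message.
rewrite exchange_big /=.
apply: (@leq_trans (\sum_(i < n) n * (2 * (t.+1 + 1)))); last first.
  rewrite sum_nat_const card_ord; lia.
apply: leq_sum => i _.
rewrite -!big_distrr /= big_split /= basic_decisions early_rounds.
rewrite !leq_mul2l; apply/orP; right; apply/orP; right.
by apply: leq_add; [exact: geq_minr | case: (_ != _)].
Qed.
End BasicProtocol.

Theorem mainTheorem13 :
  (forall (n t : nat), t + 2 <= n ->
     forall (init : 'I_n -> bool) (N : {set 'I_n}) (F : nat -> 'I_n -> 'I_n -> bool),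
       SO t N F ->
       exists M0 : nat, forall M : nat, M0 <= M -> msgs_min t init F M = n ^ 2)
  /\
  (exists C : nat, forall (n t : nat), t + 2 <= n ->
     forall (init : 'I_n -> bool) (N : {set 'I_n}) (F : nat -> 'I_n -> 'I_n -> bool),
       SO t N F ->
       forall M : nat, bits_basic init F M <= C * n ^ 2 * t.+1).
Proof.
split.
- move=> n t _ init N F _; exists t.+2 => M late.
  exact: min_message_count.
- exists 4 => n t _ init N F [few_faulty nonfaulty_reliable] M.
  exact: (basic_bits_bound init nonfaulty_reliable few_faulty M).
Qed.
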